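(* Let $(p_1,\beta_1),\dots,(p_K,\beta_K)$ be pairwise distinct points with $0<p_k<1$ and $0<\beta_k\le\pi/2$. For each $k$ define $F_k:[0,1]\to[0,\pi/2]$ by $$F_k(A)=\begin{cases}0,& A\le p_k,\\[2pt] \dfrac{\pi}{2}-\arccos\dfrac{\sqrt{A^2-p_k^2}}{\sin\beta_k\sqrt{1-p_k^2}},& p_k<A<\sqrt{\sin^2\beta_k+p_k^2\cos^2\beta_k},\\[6pt] \dfrac{\pi}{2},& A\ge\sqrt{\sin^2\beta_k+p_k^2\cos^2\beta_k}.\end{cases}$$ Then $F_1,\dots,F_K$ are linearly independent functions on $[0,1]$. Consequently, for any function $C$ on $[0,1]$ of the form $C(A)=\sum_{k=1}^K w_kF_k(A)$, the weights $w_1,\dots,w_K$ are uniquely determined by $C$.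
   Context: Bin model: the population is divided into bins, each bin $k$ consisting of biaxial ellipsoids with elongation $p_k$ and spin latitude $\beta_k$ (spin longitudes and viewing longitudes isotropic, viewing directions in the reference plane), with occupation number $w_k$. $F_k$ is the corresponding contribution to the cumulative distribution function $C(A)$ of the inverse amplitude $A$. *)

From Stdlib Require Import Reals Lra.
Open Scope R_scope.

Fixpoint fsum (f : nat -> R) (n : nat) : R :=
  match n with
  | O => 0
  | S m => fsum f m + f m
  end.

Definition Athr (p beta : R) : R :=
  sqrt (sin beta ^ 2 + p ^ 2 * cos beta ^ 2).

Definition Fbin (p beta A : R) : R :=
  if Rle_dec A p then 0
  else if Rlt_dec A (Athr p beta) then
    PI / 2 - acos (sqrt (A ^ 2 - p ^ 2) / (sin beta * sqrt (1 - p ^ 2)))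
  else PI / 2.

(* Suppose [sum_k w_k F_k = 0] on [0,1] with some [w_k <> 0], and let [p0] be the least [p_k]
   carrying a nonzero weight.  Just above [p0] every bin with [p_k > p0] vanishes and every bin
   with [p_k = p0] is in its arccos regime, so [sum_{p_k = p0} w_k F_k = 0] there.  Differentiating
   gives [sum w_k (g_k - A^2)^(-1/2) = 0] with [g_k = p0^2 + sin^2 beta_k (1 - p0^2)], and further
   differentiation gives the same for every odd power [(g_k - A^2)^(-(2n+1)/2)].  At a fixed [A]
   these are the power sums of distinct nodes [1 / (g_k - A^2)] (the [g_k] are distinct because
   the [beta_k] are), so a Vandermonde argument forces all these weights to vanish. *)

From Stdlib Require Import Reals Lra Lia Classical.
From Coquelicot Require Import Coquelicot.
Open Scope R_scope.


Lemma fsum_ext (f g : nat -> R) (K : nat) :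
  (forall k, (k < K)%nat -> f k = g k) -> fsum f K = fsum g K.
Proof.
  induction K as [|K IH]; intros H; simpl; auto.
  rewrite IH by (intros; apply H; lia). rewrite H by lia. reflexivity.
Qed.

Lemma fsum_minus (f g : nat -> R) (K : nat) :
  fsum (fun k => f k - g k) K = fsum f K - fsum g K.
Proof. induction K as [|K IH]; simpl; [ring | rewrite IH; ring]. Qed.

Lemma fsum_mult_l (a : R) (f : nat -> R) (K : nat) :
  fsum (fun k => a * f k) K = a * fsum f K.
Proof. induction K as [|K IH]; simpl; [ring | rewrite IH; ring]. Qed.

Lemma fsum_eq0 (f : nat -> R) (K : nat) :
  (forall k, (k < K)%nat -> f k = 0) -> fsum f K = 0.
Proof.
  induction K as [|K IH]; intros H; simpl; auto.
  rewrite IH, H by (auto; intros; apply H; lia). ring.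
Qed.

Lemma power_sums_eq0_coef_eq0 (K : nat) : forall d t : nat -> R,
  (forall i j, (i < K)%nat -> (j < K)%nat -> i <> j -> d i <> 0 -> d j <> 0 ->
     t i <> t j) ->
  (forall n, fsum (fun k => d k * t k ^ n) K = 0) ->
  forall k, (k < K)%nat -> d k = 0.
Proof.
  induction K as [|m IH]; intros d t Hdist Hsum; [intros; lia|].
  assert (Hlow : d m = 0 -> forall k, (k < m)%nat -> d k = 0).
  { intros Hm. apply (IH d t); [intros; apply Hdist; auto; lia|].
    intros n. pose proof (Hsum n) as E. simpl in E. rewrite Hm in E. lra. }
  assert (Hm : d m = 0).
  { destruct (Req_dec (d m) 0) as [|Hm]; auto.
    (* the power sums of d k (t k - t m) over k < m are differences of those of d *)
    assert (Hshift : forall k, (k < m)%nat -> d k * (t k - t m) = 0).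
    { apply (IH (fun k => d k * (t k - t m)) t).
      - intros i j Hi Hj Hij Hdi Hdj.
        apply Hdist; try lia; auto; intro E; [apply Hdi | apply Hdj]; rewrite E; ring.
      - intros n. pose proof (Hsum n) as E0; pose proof (Hsum (S n)) as E1.
        simpl in E0, E1.
        rewrite (fsum_ext _ (fun k => d k * t k ^ S n - t m * (d k * t k ^ n)))
          by (intros; simpl; ring).
        rewrite fsum_minus, fsum_mult_l. simpl. nra. }
    assert (Hzero : forall k, (k < m)%nat -> d k = 0).
    { intros k Hk. destruct (Req_dec (d k) 0) as [|Hdk]; auto.
      exfalso. apply (Hdist k m); auto; try lia.
      destruct (Rmult_integral _ _ (Hshift k Hk)); [contradiction | lra]. }
    pose proof (Hsum 0%nat) as E. simpl in E.
    rewrite fsum_eq0 in E by (intros k Hk; rewrite Hzero; auto; ring). lra. }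
  intros k Hk. destruct (Nat.eq_dec k m) as [->|]; auto. apply Hlow; auto; lia.
Qed.

Lemma is_derive_fsum_scal (K : nat) (c : nat -> R) (f : nat -> R -> R) (df : nat -> R)
  (x : R) :
  (forall k, (k < K)%nat -> c k <> 0 -> is_derive (f k) x (df k)) ->
  is_derive (fun y => fsum (fun k => c k * f k y) K) x (fsum (fun k => c k * df k) K).
Proof.
  induction K as [|K IH]; intros H; simpl.
  - apply (is_derive_const 0 x).
  - apply (is_derive_plus (fun y => fsum (fun k => c k * f k y) K) (fun y => c K * f K y)).
    + apply IH; intros; apply H; auto; lia.
    + destruct (Req_dec (c K) 0) as [E|E].
      * rewrite E. apply (is_derive_ext (fun _ => 0)); [intros; simpl; ring|].
        replace (0 * df K) with 0 by ring. apply (is_derive_const 0 x).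
      * apply is_derive_scal, H; auto.
Qed.

Lemma is_derive_eq0_on_interval (f : R -> R) (a b x l : R) :
  a < x < b -> (forall y, a < y < b -> f y = 0) -> is_derive f x l -> l = 0.
Proof.
  intros Hx Hf Hl.
  assert (H0 : is_derive f x 0).
  { apply (is_derive_ext_loc (fun _ => 0)); [|apply (is_derive_const 0 x)].
    assert (Hr : 0 < Rmin (x - a) (b - x)) by (apply Rmin_glb_lt; lra).
    exists (mkposreal _ Hr). intros y Hy. simpl in Hy.
    unfold ball in Hy; simpl in Hy; unfold AbsRing_ball, abs, minus, plus, opp in Hy; simpl in Hy.
    apply Rabs_def2 in Hy.
    pose proof (Rmin_l (x - a) (b - x)); pose proof (Rmin_r (x - a) (b - x)).
    symmetry; apply Hf; lra. }
  rewrite <- (is_derive_unique _ _ _ Hl). exact (is_derive_unique _ _ _ H0).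
Qed.

Lemma is_derive_inv_sqrt_pow (g : R) (n : nat) (x : R) : x ^ 2 < g ->
  is_derive (fun y => (/ sqrt (g - y ^ 2)) ^ (2 * n + 1)) x
    (INR (2 * n + 1) * x * (/ sqrt (g - x ^ 2)) ^ (2 * n + 3)).
Proof.
  intros Hx.
  replace (g - x ^ 2) with (g + - (x * (x * 1))) by ring.
  assert (Hs : 0 < sqrt (g + - (x * (x * 1)))) by (apply sqrt_lt_R0; simpl in Hx; lra).
  auto_derive; [repeat split; simpl in Hx; lra |].
  set (s := sqrt (g + - (x * (x * 1)))) in *.
  replace (n + (n + 0) + 1)%nat with (2 * n + 1)%nat by lia.
  replace (Init.Nat.pred (2 * n + 1)) with (2 * n)%nat by lia.
  rewrite !pow_add. set (T := (/ s) ^ (2 * n)). simpl. field. lra.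
Qed.

Section InvSqrtIndependence.

Variables (K : nat) (c g : nat -> R) (a b : R).
Hypothesis a_ge0 : 0 <= a.
Hypothesis below_g : forall A k, a < A < b -> (k < K)%nat -> c k <> 0 -> A ^ 2 < g k.

(* Each derivative of the vanishing sum is again a vanishing sum, with exponent raised by 2. *)
Lemma inv_sqrt_odd_pow_sums_eq0 :
  (forall A, a < A < b -> fsum (fun k => c k * / sqrt (g k - A ^ 2)) K = 0) ->
  forall n A, a < A < b ->
  fsum (fun k => c k * (/ sqrt (g k - A ^ 2)) ^ (2 * n + 1)) K = 0.
Proof.
  intros H0 n; induction n as [|n IH]; intros A HA.
  - rewrite <- (H0 A HA). apply fsum_ext; intros; simpl; ring.
  - assert (Hd := is_derive_fsum_scal K c
      (fun k y => (/ sqrt (g k - y ^ 2)) ^ (2 * n + 1))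
      (fun k => INR (2 * n + 1) * A * (/ sqrt (g k - A ^ 2)) ^ (2 * n + 3)) A
      (fun k Hk Hc => is_derive_inv_sqrt_pow _ _ _ (below_g A k HA Hk Hc))).
    apply (is_derive_eq0_on_interval _ a b A _ HA IH) in Hd.
    rewrite (fsum_ext _ (fun k => INR (2 * n + 1) * A *
                (c k * (/ sqrt (g k - A ^ 2)) ^ (2 * n + 3)))) in Hd
      by (intros; ring).
    rewrite fsum_mult_l in Hd.
    assert (0 < INR (2 * n + 1)) by (apply lt_0_INR; lia).
    replace (2 * S n + 1)%nat with (2 * n + 3)%nat by lia.
    destruct (Rmult_integral _ _ Hd); [nra | assumption].
Qed.

Lemma inv_sqrt_sums_eq0_coef_eq0 :
  a < b ->
  (forall i j, (i < K)%nat -> (j < K)%nat -> i <> j -> c i <> 0 -> c j <> 0 ->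
     g i <> g j) ->
  (forall A, a < A < b -> fsum (fun k => c k * / sqrt (g k - A ^ 2)) K = 0) ->
  forall k, (k < K)%nat -> c k = 0.
Proof.
  intros Hab Hdist H0 k Hk.
  set (A0 := (a + b) / 2). assert (HA0 : a < A0 < b) by (unfold A0; lra).
  set (s := fun k => / sqrt (g k - A0 ^ 2)).
  assert (Hs : forall k, (k < K)%nat -> c k <> 0 -> 0 < s k /\ s k ^ 2 = / (g k - A0 ^ 2)).
  { intros j Hj Hcj. pose proof (below_g A0 j HA0 Hj Hcj).
    assert (0 < sqrt (g j - A0 ^ 2)) by (apply sqrt_lt_R0; lra).
    unfold s; split; [apply Rinv_0_lt_compat; lra|].
    rewrite pow_inv, pow2_sqrt; lra. }
  (* the odd power sums at [A0] are the power sums of the weights [c k * s k]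
     at the nodes [s k ^ 2] *)
  assert (Hcs : c k * s k = 0).
  { apply (power_sums_eq0_coef_eq0 K (fun k => c k * s k) (fun k => s k ^ 2)); auto.
    - intros i j Hi Hj Hij Hdi Hdj Ht.
      assert (Hci : c i <> 0) by (intro E; apply Hdi; rewrite E; ring).
      assert (Hcj : c j <> 0) by (intro E; apply Hdj; rewrite E; ring).
      apply (Hdist i j Hi Hj Hij Hci Hcj).
      destruct (Hs i Hi Hci) as [_ Ei], (Hs j Hj Hcj) as [_ Ej].
      rewrite Ei, Ej in Ht. apply Rinv_eq_reg in Ht. lra.
    - intros n. rewrite <- (inv_sqrt_odd_pow_sums_eq0 H0 n A0 HA0).
      apply fsum_ext; intros j _. unfold s.
      rewrite <- pow_mult, Nat.add_1_r. simpl. ring. }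
  destruct (Req_dec (c k) 0) as [|Hck]; auto.
  destruct (Hs k Hk Hck). destruct (Rmult_integral _ _ Hcs); lra.
Qed.

End InvSqrtIndependence.

Lemma ex_argmin_finite (K : nat) (P : nat -> Prop) (v : nat -> R) :
  (exists k, (k < K)%nat /\ P k) ->
  exists k0, (k0 < K)%nat /\ P k0 /\ forall k, (k < K)%nat -> P k -> v k0 <= v k.
Proof.
  induction K as [|m IH]; intros [k [Hk Pk]]; [lia|].
  destruct (classic (exists k, (k < m)%nat /\ P k)) as [Hex|Hno].
  - destruct (IH Hex) as [k0 [Hk0 [Pk0 Hmin]]].
    destruct (classic (P m /\ v m < v k0)) as [[Pm Hlt]|Hnlt].
    + exists m; repeat split; auto. intros j Hj Pj.
      destruct (Nat.eq_dec j m) as [->|]; [lra|]. specialize (Hmin j ltac:(lia) Pj); lra.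
    + exists k0; repeat split; auto. intros j Hj Pj.
      destruct (Nat.eq_dec j m) as [->|]; [|apply Hmin; auto; lia].
      apply Rnot_lt_le. intro; apply Hnlt; auto.
  - exists m; repeat split; [lia| |].
    + destruct (Nat.eq_dec k m) as [<-|]; auto. exfalso; apply Hno; exists k; split; auto; lia.
    + intros j Hj Pj. destruct (Nat.eq_dec j m) as [->|]; [lra|].
      exfalso; apply Hno; exists j; split; auto; lia.
Qed.

Lemma ex_gt_le_finite (K : nat) (v : nat -> R) (x : R) :
  (forall k, (k < K)%nat -> x < v k) ->
  exists d, x < d /\ forall k, (k < K)%nat -> d <= v k.
Proof.
  induction K as [|m IH]; intros H.
  - exists (x + 1); split; [lra | intros; lia].
  - destruct IH as [d [Hd Hle]]; [intros; apply H; lia|].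
    exists (Rmin d (v m)); split; [apply Rmin_glb_lt; auto; apply H; lia|].
    intros k Hk. destruct (Nat.eq_dec k m) as [->|]; [apply Rmin_r|].
    apply Rle_trans with d; [apply Rmin_l | apply Hle; lia].
Qed.

Definition Athr2 (p beta : R) : R := p ^ 2 + sin beta ^ 2 * (1 - p ^ 2).

Lemma Athr_sqrt (p beta : R) : Athr p beta = sqrt (Athr2 p beta).
Proof.
  unfold Athr, Athr2. f_equal.
  pose proof (sin2_cos2 beta) as E. unfold Rsqr in E. simpl. nra.
Qed.

Lemma sin_gt_0_half_pi (beta : R) : 0 < beta <= PI / 2 -> 0 < sin beta.
Proof. intros; apply sin_gt_0; pose proof PI_RGT_0; lra. Qed.

Lemma Athr2_gt (p beta : R) : 0 < p < 1 -> 0 < beta <= PI / 2 -> p ^ 2 < Athr2 p beta.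
Proof.
  intros Hp Hb. pose proof (sin_gt_0_half_pi beta Hb). unfold Athr2.
  assert (0 < sin beta ^ 2 * (1 - p ^ 2)) by (apply Rmult_lt_0_compat; [apply pow_lt|]; nra).
  lra.
Qed.

Lemma Athr_gt (p beta : R) : 0 < p < 1 -> 0 < beta <= PI / 2 -> p < Athr p beta.
Proof.
  intros Hp Hb. pose proof (Athr2_gt p beta Hp Hb).
  rewrite Athr_sqrt, <- (sqrt_pow2 p) at 1 by lra.
  apply sqrt_lt_1; nra.
Qed.

Lemma sq_lt_Athr2 (p beta A : R) : 0 <= A -> A < Athr p beta -> A ^ 2 < Athr2 p beta.
Proof.
  rewrite Athr_sqrt. intros HA H.
  destruct (Rle_lt_dec 0 (Athr2 p beta)) as [Hg|Hg]; [|rewrite sqrt_neg_0 in H; lra].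
  pose proof (sqrt_pos (Athr2 p beta)). rewrite <- (pow2_sqrt _ Hg). nra.
Qed.

Lemma Athr2_inj_beta (p b1 b2 : R) : 0 < p < 1 -> 0 < b1 <= PI / 2 -> 0 < b2 <= PI / 2 ->
  Athr2 p b1 = Athr2 p b2 -> b1 = b2.
Proof.
  unfold Athr2. intros Hp H1 H2 E.
  pose proof (sin_gt_0_half_pi _ H1); pose proof (sin_gt_0_half_pi _ H2).
  assert (Es : sin b1 = sin b2).
  { assert (E2 : sin b1 ^ 2 = sin b2 ^ 2) by (apply Rmult_eq_reg_r with (1 - p ^ 2); nra).
    rewrite <- (sqrt_pow2 (sin b1)), <- (sqrt_pow2 (sin b2)), E2; lra. }
  pose proof PI_RGT_0.
  destruct (total_order_T b1 b2) as [[L|L]|L]; auto; exfalso.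
  - pose proof (sin_increasing_1 b1 b2 ltac:(lra) ltac:(lra) ltac:(lra) ltac:(lra) L); lra.
  - pose proof (sin_increasing_1 b2 b1 ltac:(lra) ltac:(lra) ltac:(lra) ltac:(lra) L); lra.
Qed.

Definition Fmid (p beta A : R) : R :=
  PI / 2 - acos (sqrt (A ^ 2 - p ^ 2) / (sin beta * sqrt (1 - p ^ 2))).

Lemma Fbin_le (p beta A : R) : A <= p -> Fbin p beta A = 0.
Proof. intros H. unfold Fbin. destruct (Rle_dec A p); [reflexivity | contradiction]. Qed.

Lemma Fbin_mid (p beta A : R) : p < A < Athr p beta -> Fbin p beta A = Fmid p beta A.
Proof.
  intros H. unfold Fbin. destruct (Rle_dec A p); [lra|].
  destruct (Rlt_dec A (Athr p beta)); [reflexivity | lra].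
Qed.

Lemma is_derive_Fmid (p beta A : R) : 0 < p < 1 -> 0 < beta <= PI / 2 ->
  p < A -> A ^ 2 < Athr2 p beta ->
  is_derive (Fmid p beta) A (A / sqrt (A ^ 2 - p ^ 2) * / sqrt (Athr2 p beta - A ^ 2)).
Proof.
  intros Hp Hb HA Hg.
  pose proof (sin_gt_0_half_pi _ Hb) as Hsin.
  assert (Hq : 0 < sqrt (1 - p ^ 2)) by (apply sqrt_lt_R0; nra).
  set (r := sin beta * sqrt (1 - p ^ 2)).
  assert (Hr : 0 < r) by (unfold r; nra).
  assert (Hr2 : r ^ 2 = sin beta ^ 2 * (1 - p ^ 2))
    by (unfold r; rewrite Rpow_mult_distr, pow2_sqrt by nra; reflexivity).
  assert (HS : 0 < sqrt (A ^ 2 - p ^ 2)) by (apply sqrt_lt_R0; nra).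
  assert (HS2 : sqrt (A ^ 2 - p ^ 2) ^ 2 = A ^ 2 - p ^ 2) by (apply pow2_sqrt; nra).
  unfold Athr2 in Hg |- *.
  set (x := sqrt (A ^ 2 - p ^ 2) / r).
  assert (Hx : -1 < x < 1).
  { unfold x; split.
    - apply Rlt_le_trans with 0; [lra | apply Rle_div_r; lra].
    - apply Rlt_div_l; [lra|]. nra. }
  assert (Hdx : is_derive (fun A => sqrt (A ^ 2 - p ^ 2) / r) A
                  (A / (r * sqrt (A ^ 2 - p ^ 2)))).
  { auto_derive; [nra|].
    replace (A * (A * 1) + - (p * (p * 1))) with (A ^ 2 - p ^ 2) by ring. field. lra. }
  assert (Hdacos : is_derive acos x (-1 / sqrt (1 - x²))).
  { apply is_derive_Reals, (derive_pt_eq_1 _ _ _ (derivable_pt_acos x Hx)).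
    apply derive_pt_acos. }
  assert (Hsq : sqrt (1 - x²) * r = sqrt (p ^ 2 + sin beta ^ 2 * (1 - p ^ 2) - A ^ 2)).
  { rewrite <- (sqrt_pow2 r) by lra. rewrite <- sqrt_mult.
    - f_equal. unfold x, Rsqr. field_simplify; [|lra]. rewrite HS2, Hr2. field.
    - unfold Rsqr in Hx |- *. nra.
    - nra. }
  assert (0 < sqrt (1 - x²)) by (apply sqrt_lt_R0; unfold Rsqr; nra).
  pose proof (is_derive_minus (fun _ => PI / 2) _ A _ _ (is_derive_const (PI / 2) A)
    (is_derive_comp acos (fun A => sqrt (A ^ 2 - p ^ 2) / r) A _ _ Hdacos Hdx)) as Hd.
  unfold Fmid. fold r.
  replace (A / sqrt (A ^ 2 - p ^ 2) * / sqrt (p ^ 2 + sin beta ^ 2 * (1 - p ^ 2) - A ^ 2))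
    with (minus 0 (scal (A / (r * sqrt (A ^ 2 - p ^ 2))) (-1 / sqrt (1 - x²)))).
  - eapply is_derive_ext; [|exact Hd]. intros y; simpl. unfold minus, plus, opp; simpl. ring.
  - rewrite <- Hsq. unfold minus, plus, opp, scal, mult; simpl. unfold mult; simpl.
    field. replace (A * (A * 1) - p * (p * 1)) with (A ^ 2 - p ^ 2) by ring.
    repeat split; lra.
Qed.

Lemma Fmid_sums_eq0_inv_sqrt (K : nat) (c beta : nat -> R) (p0 b : R) :
  0 < p0 < 1 ->
  (forall k, (k < K)%nat -> c k <> 0 -> 0 < beta k <= PI / 2) ->
  (forall A k, p0 < A < b -> (k < K)%nat -> c k <> 0 -> A ^ 2 < Athr2 p0 (beta k)) ->
  (forall A, p0 < A < b -> fsum (fun k => c k * Fmid p0 (beta k) A) K = 0) ->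
  forall A, p0 < A < b ->
  fsum (fun k => c k * / sqrt (Athr2 p0 (beta k) - A ^ 2)) K = 0.
Proof.
  intros Hp0 Hbeta Hthr H0 A HA.
  assert (Hd := is_derive_fsum_scal K c (fun k => Fmid p0 (beta k))
    (fun k => A / sqrt (A ^ 2 - p0 ^ 2) * / sqrt (Athr2 p0 (beta k) - A ^ 2)) A
    (fun k Hk Hc => is_derive_Fmid _ _ _ Hp0 (Hbeta k Hk Hc) (proj1 HA)
                      (Hthr A k HA Hk Hc))).
  apply (is_derive_eq0_on_interval _ p0 b A _ HA H0) in Hd.
  rewrite (fsum_ext _ (fun k => A / sqrt (A ^ 2 - p0 ^ 2) *
             (c k * / sqrt (Athr2 p0 (beta k) - A ^ 2)))) in Hd by (intros; ring).
  rewrite fsum_mult_l in Hd.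
  assert (0 < sqrt (A ^ 2 - p0 ^ 2)) by (apply sqrt_lt_R0; nra).
  assert (0 < A / sqrt (A ^ 2 - p0 ^ 2)) by (apply Rdiv_lt_0_compat; lra).
  destruct (Rmult_integral _ _ Hd); [lra | assumption].
Qed.

Lemma Fbin_lin_indep (K : nat) (p beta : nat -> R)
  (hp : forall k, (k < K)%nat -> 0 < p k < 1)
  (hbeta : forall k, (k < K)%nat -> 0 < beta k <= PI / 2)
  (hdist : forall i j, (i < K)%nat -> (j < K)%nat -> i <> j ->
           (p i, beta i) <> (p j, beta j))
  (w : nat -> R) :
  (forall A, 0 <= A <= 1 -> fsum (fun k => w k * Fbin (p k) (beta k) A) K = 0) ->
  forall k, (k < K)%nat -> w k = 0.
Proof.
  intros Hw k Hk. destruct (Req_dec (w k) 0) as [|Hwk]; auto. exfalso.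
  destruct (ex_argmin_finite K (fun k => w k <> 0) p) as [k0 [Hk0 [Hwk0 Hmin]]]; [eauto|].
  set (p0 := p k0). assert (Hp0 : 0 < p0 < 1) by (apply hp; auto).
  (* a window [(p0, b)] in which every bin with [p k > p0] vanishes and every bin
     with [p k = p0] is in its arccos regime *)
  destruct (ex_gt_le_finite K
    (fun k => if Rlt_dec p0 (p k) then p k else Athr p0 (beta k)) p0) as [d [Hd Hle]].
  { intros j Hj. destruct (Rlt_dec p0 (p j)); auto. apply Athr_gt; auto. }
  set (b := Rmin d 1).
  assert (Hb : p0 < b <= d) by (split; [apply Rmin_glb_lt; lra | apply Rmin_l]).
  assert (Hthr : forall A j, p0 < A < b -> (j < K)%nat -> p j = p0 -> A < Athr p0 (beta j)).
  { intros A j HA Hj Ej. specialize (Hle j Hj). rewrite Ej in Hle.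
    destruct (Rlt_dec p0 p0); lra. }
  set (c := fun k => if Req_EM_T (p k) p0 then w k else 0).
  assert (Hc : forall j, c j <> 0 -> p j = p0).
  { intros j. unfold c. destruct (Req_EM_T (p j) p0); tauto. }
  assert (Hwin : forall A, p0 < A < b -> fsum (fun k => c k * Fmid p0 (beta k) A) K = 0).
  { intros A HA. assert (Hb1 : b <= 1) by apply Rmin_r.
    rewrite <- (Hw A) by lra. apply fsum_ext. intros j Hj. unfold c.
    destruct (Req_EM_T (p j) p0) as [Ej|Nj].
    - rewrite Ej, Fbin_mid; auto. split; [lra | apply Hthr; auto].
    - destruct (Req_dec (w j) 0) as [->|Hwj]; [ring|].
      assert (Hlt : p0 < p j) by (specialize (Hmin j Hj Hwj); fold p0 in Hmin; lra).
      specialize (Hle j Hj). destruct (Rlt_dec p0 (p j)); [|lra].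
      rewrite Fbin_le by lra. ring. }
  assert (Hsq : forall A j, p0 < A < b -> (j < K)%nat -> c j <> 0 ->
                  A ^ 2 < Athr2 p0 (beta j))
    by (intros; apply sq_lt_Athr2; [lra | apply Hthr; auto]).
  apply Hwk0. replace (w k0) with (c k0) by (unfold c; destruct (Req_EM_T (p k0) p0); tauto).
  apply (inv_sqrt_sums_eq0_coef_eq0 K c (fun k => Athr2 p0 (beta k)) p0 b); auto; try lra.
  - intros i j Hi Hj Hij Hci Hcj E. apply (hdist i j Hi Hj Hij).
    rewrite (Hc i Hci), (Hc j Hcj), (Athr2_inj_beta p0 (beta i) (beta j)); auto.
  - apply (Fmid_sums_eq0_inv_sqrt K c beta p0 b); auto.
Qed.

Theorem theorem2 (K : nat) (p beta : nat -> R)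
  (hp : forall k, (k < K)%nat -> 0 < p k < 1)
  (hbeta : forall k, (k < K)%nat -> 0 < beta k <= PI / 2)
  (hdist : forall i j, (i < K)%nat -> (j < K)%nat -> i <> j ->
           (p i, beta i) <> (p j, beta j)) :
  (forall w : nat -> R,
     (forall A, 0 <= A <= 1 -> fsum (fun k => w k * Fbin (p k) (beta k) A) K = 0) ->
     forall k, (k < K)%nat -> w k = 0)
  /\
  (forall w w' : nat -> R,
     (forall A, 0 <= A <= 1 ->
        fsum (fun k => w k * Fbin (p k) (beta k) A) K =
        fsum (fun k => w' k * Fbin (p k) (beta k) A) K) ->
     forall k, (k < K)%nat -> w k = w' k).
Proof.
  split; [exact (Fbin_lin_indep K p beta hp hbeta hdist)|].
  intros w w' H k Hk.
  apply Rminus_diag_uniq.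
  apply (Fbin_lin_indep K p beta hp hbeta hdist (fun k => w k - w' k)); auto.
  intros A HA.
  rewrite (fsum_ext _ (fun k => w k * Fbin (p k) (beta k) A - w' k * Fbin (p k) (beta k) A))
    by (intros; ring).
  rewrite fsum_minus, H; auto; ring.
Qed.
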